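(* Fix $c>0$ and an integer $k\ge1$, and let $\Phi\in\Omega(n,\lfloor c2^n\rfloor)$. Then with probability $1-o(1)$ (as $n\to\infty$), PUR does not reject at any of the stages $n,n-1,\dots,n-k+1$.
   Context: $\mathcal H_n$ is the set of pairs $(P,S)$ with $P\in\{\emptyset,\{1\},\dots,\{n\}\}$, $S\subseteq\{1,\dots,n\}$, $(P,S)\ne(\emptyset,\emptyset)$, representing the Horn clause $\bigvee_{i\in P}x_i\vee\bigvee_{j\in S}\neg x_j$ (so $|\mathcal H_n|\sim n2^n$; the paper writes this number as $(n+2)2^n-1$); $\Omega(n,m)$ is the distribution of the conjunction of $m$ clauses drawn independently, uniformly with repetition from $\mathcal H_n$. Algorithm PUR on a Horn formula $\Phi$: if $\Phi$ has no positive unit clause (single literal $x_i$), accept. Otherwise choose uniformly at random a positive unit clause $x_i$; if $\Phi$ contains the clause $\neg x_i$, reject; otherwise set $x_i=1$ (delete clauses containing $x_i$, delete $\neg x_i$ from the others) and recurse. Stage $t$ is the iteration performed when exactly $t$ variables are unassigned (first iteration = stage $n$). *)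

From HB Require Import structures.
From mathcomp Require Import all_boot all_order all_algebra.
From mathcomp Require Import all_classical all_reals all_analysis.
Set Implicit Arguments. Unset Strict Implicit. Unset Printing Implicit Defensive.
Import Order.TTheory GRing.Theory Num.Theory.
Local Open Scope ring_scope.

(* A raw clause (P,S): P = Some i means positive literal x_i, None means no
   positive literal; S = set of negated variables.  Variables are 'I_n. *)
Definition rclause (n : nat) := (option 'I_n * {set 'I_n})%type.

Definition horn (n : nat) := {c : rclause n | c != (None, finset.set0)}.

Definition pos_units n (F : seq (rclause n)) : {set 'I_n} :=
  [set i | (Some i, finset.set0) \in F].

Definition has_neg_unit n (F : seq (rclause n)) (i : 'I_n) : bool :=
  (None, [set i]) \in F.

Definition assign_true n (F : seq (rclause n)) (i : 'I_n) : seq (rclause n) :=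
  [seq (c.1, c.2 :\ i) | c <- F & c.1 != Some i].

Fixpoint pur_reject_prob (R : realType) n (j : nat) (F : seq (rclause n)) : R :=
  match j with
  | 0 => 0
  | j'.+1 =>
      if pos_units F == finset.set0 then 0
      else (#|pos_units F|%:R)^-1 *
           \sum_(i in pos_units F)
              (if has_neg_unit F i then 1 else pur_reject_prob R j' (assign_true F i))
  end.

(* Probability, for Phi ~ Omega(n,m) and the internal coin flips of PUR,
   that PUR does not reject at any of the stages n, n-1, ..., n-k+1
   (i.e. during its first k iterations). *)
Definition pur_no_reject_prob (R : realType) (n m k : nat) : R :=
  (#|{: horn n}|%:R ^+ m)^-1 *
  \sum_(Phi : m.-tuple (horn n)) (1 - pur_reject_prob R k (map val Phi)).

From HB Require Import structures.
From mathcomp Require Import all_boot all_order all_algebra.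
From mathcomp Require Import all_classical all_reals all_analysis.
From mathcomp Require Import zify ring lra.
Import Order.TTheory GRing.Theory Num.Theory numFieldNormedType.Exports.
Set Implicit Arguments. Unset Strict Implicit. Unset Printing Implicit Defensive.

(* If PUR can reject within its first k iterations, then Phi contains a
   witness: a set I of s <= k variables such that every i in I is the head
   of a clause x_i \/ ~S_i of Phi with S_i \subset I, and some negative
   clause ~S of Phi has S \subset I.  Listing I as a duplicate-free sequence
   t, the s + 1 required clauses lie in pairwise disjoint classes of at most
   2^s Horn clauses each, so m independent uniform draws among the at least
   n 2^n Horn clauses hit all of them with probability at most
   (m 2^s / (n 2^n))^(s+1) <= (c 2^s / n)^(s+1).  Summing over the n^s
   sequences t and over s <= k bounds the probability of rejection by a
   constant depending only on c and k, divided by n. *)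

Lemma leq_expnS_binomial (m r : nat) : m ^ r + r * m ^ r.-1 <= m.+1 ^ r.
Proof.
case: r => [|r] /=; first by rewrite !expn0.
elim: r => [|r IH]; first by rewrite !expn1 mul1n expn0 addn1.
rewrite [m.+1 ^ r.+2]expnS [m ^ r.+2]expnS [m ^ r.+1]expnS.
move: IH; rewrite /= expnS; set a := m ^ r; set b := m.+1 ^ r.+1.
nia.
Qed.

Section HittingTuples.
Variable T : finType.
Implicit Types (L : seq {set T}) (A : {set T}).

Definition hits_all L (s : seq T) : bool :=
  all (fun A : {set T} => has (fun x => x \in A) s) L.

Definition n_hitting m L : nat := \sum_(t : m.-tuple T) hits_all L t.

Definition disjoint_sets L := forall x, count (fun A : {set T} => x \in A) L <= 1.

Lemma disjoint_sets_rem L A : disjoint_sets L -> disjoint_sets (rem A L).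
Proof. by move=> dL x; rewrite count_rem (leq_trans (leq_subr _ _)). Qed.

Lemma sum_tupleS m (F : m.+1.-tuple T -> nat) :
  \sum_(t : m.+1.-tuple T) F t = \sum_(x : T) \sum_(t : m.-tuple T) F [tuple of x :: t].
Proof.
rewrite pair_big /= (reindex (fun p : T * m.-tuple T => [tuple of p.1 :: p.2])) //=.
exists (fun t => (thead t, [tuple of behead t])).
  by move=> [x t] _ /=; congr (_, _); apply: val_inj.
by move=> t _; rewrite [in RHS](tuple_eta t).
Qed.

(* Since the sets of [L] are disjoint, the first entry [x] hits at most one of
   them; if it hits [A], the rest must hit the others. *)
Lemma hits_all_cons L x (s : seq T) : disjoint_sets L ->
  hits_all L (x :: s) <= hits_all L s + \sum_(A <- L) (x \in A) * hits_all (rem A L) s.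
Proof.
move=> dL; case: (boolP (has (fun A : {set T} => x \in A) L)) => [/hasP[A AL xA]|noA].
  rewrite (perm_big _ (perm_to_rem AL)) big_cons xA mul1n addnCA.
  apply: leq_trans (leq_addr _ _); case: (boolP (hits_all L (x :: s))) => // hL.
  have xRem : ~~ has (fun B : {set T} => x \in B) (rem A L).
    have := dL x; rewrite has_count (permP (perm_to_rem AL)) /= xA.
    by rewrite add1n ltnS leqn0 => /eqP ->.
  rewrite lt0b; apply/allP => B BR; have /= /orP[xB|//] := allP hL B (mem_rem BR).
  by case/hasP: xRem; exists B.
apply: leq_trans (leq_addr _ _); apply/eq_leq.
congr (nat_of_bool _); apply: eq_in_all => B BL /=.
by have -> : (x \in B) = false by apply: contraNF noA => xB; apply/hasP; exists B.
Qed.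

Lemma n_hittingS m L : disjoint_sets L ->
  n_hitting m.+1 L <= #|T| * n_hitting m L + \sum_(A <- L) #|A| * n_hitting m (rem A L).
Proof.
move=> dL; rewrite /n_hitting sum_tupleS.
apply: (@leq_trans (\sum_(x : T) \sum_(t : m.-tuple T)
   (hits_all L t + \sum_(A <- L) (x \in A) * hits_all (rem A L) t))).
  by apply: leq_sum => x _; apply: leq_sum => t _; apply: hits_all_cons.
apply/eq_leq.
under eq_bigr => x _ do rewrite big_split /=.
rewrite big_split /= sum_nat_const; congr (_ + _).
under eq_bigr => x _ do rewrite exchange_big /=.
rewrite exchange_big /=; apply: eq_bigr => A _.
under eq_bigr => x _ do rewrite -big_distrr /=.
by rewrite -big_distrl /= -sum1_card [in RHS]big_mkcond.
Qed.

Lemma n_hitting0 L : n_hitting 0 L = hits_all L [::].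
Proof.
transitivity (\sum_(t : 0.-tuple T) hits_all L [::]).
  by apply: eq_bigr => t _; rewrite tuple0.
by rewrite sum_nat_const card_tuple expn0 mul1n.
Qed.

Lemma n_hitting_le m L : disjoint_sets L ->
  #|T| ^ size L * n_hitting m L <= #|T| ^ m * m ^ size L * \prod_(A <- L) #|A|.
Proof.
elim: m L => [|m IH] L dL.
  rewrite n_hitting0; case: L dL => [|A L] _ /=; first by rewrite big_nil.
  by rewrite /nat_of_bool muln0.
set h := #|T|; set r := size L; set P := \prod_(A <- L) #|A|.
have sumRem : \sum_(A <- L) h ^ r * (#|A| * n_hitting m (rem A L)) <=
              r * (h ^ m.+1 * m ^ r.-1 * P).
  apply: (@leq_trans (\sum_(A <- L) h ^ m.+1 * m ^ r.-1 * P)).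
    rewrite big_seq [leqRHS]big_seq; apply: leq_sum => A AL.
    have := IH _ (disjoint_sets_rem A dL); rewrite size_rem //.
    rewrite /P (perm_big _ (perm_to_rem AL)) big_cons.
    have -> : r = r.-1.+1 by rewrite prednK // /r; case: (L) AL.
    rewrite /= !expnS; set a := h ^ _; set N := n_hitting _ _.
    set M := m ^ _; set Q := \prod_(_ <- rem A L) _ => le.
    have := leq_mul (leqnn (h * #|A|)) le; rewrite -/h; nia.
  by rewrite big_const_seq count_predT iter_addn_0 mulnC.
apply: (leq_trans (leq_mul (leqnn _) (n_hittingS m dL))).
rewrite mulnDr [h ^ r * \sum_(A <- L) _]big_distrr /=.
apply: leq_trans (leq_add (leqnn _) sumRem) _.
have := IH L dL; have := leq_expnS_binomial m r; rewrite -/h -/r -/P expnS.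
set X := m ^ r; set Y := m ^ r.-1; set H := h ^ m => binom IHL.
rewrite mulnCA; apply: leq_trans (leq_add (leq_mul (leqnn h) IHL) (leqnn _)) _.
apply: (@leq_trans (h * H * (X + r * Y) * P)); first by apply/eq_leq; ring.
by rewrite leq_mul2r leq_mul2l binom !orbT.
Qed.
End HittingTuples.

Fixpoint pur_can_reject n (j : nat) (F : seq (rclause n)) : bool :=
  if j is j'.+1 then
    [exists i in pos_units F,
       has_neg_unit F i || pur_can_reject j' (assign_true F i)]
  else false.

Section RejectProbability.
Local Open Scope ring_scope.
Variable R : realType.

Lemma pur_reject_prob_ge0 n j (F : seq (rclause n)) :
  0 <= pur_reject_prob R j F.
Proof.
elim: j F => [|j IH] F //=; case: ifP => // _.
by rewrite mulr_ge0 ?invr_ge0 ?ler0n //; apply: sumr_ge0 => i _; case: ifP.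
Qed.

Lemma pur_reject_prob_le_can_reject n j (F : seq (rclause n)) :
  pur_reject_prob R j F <= (pur_can_reject j F)%:R.
Proof.
elim: j F => [|j IH] F //=; case: ifPn => [_|P0]; first exact: ler0n.
have cardP : 0 < (#|pos_units F|%:R : R) by rewrite ltr0n card_gt0.
case: (boolP [exists _ in _, _]) => [_|noRej].
  apply: (@le_trans _ _ (#|pos_units F|%:R^-1 * \sum_(i in pos_units F) 1)).
    rewrite ler_wpM2l ?invr_ge0 ?ler0n //; apply: ler_sum => i _.
    by case: ifP => // _; apply: le_trans (IH _) _; rewrite lern1 leq_b1.
  by rewrite sumr_const mulr1n mulVf // gt_eqF.
rewrite mulr_ge0_le0 ?invr_ge0 ?ler0n //; apply: sumr_le0 => i iP.
have : ~~ (has_neg_unit F i || pur_can_reject j (assign_true F i)).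
  by apply: contra noRej => h; apply/exists_inP; exists i.
rewrite negb_or => /andP[/negbTE -> /negbTE rej].
by have := IH (assign_true F i); rewrite rej.
Qed.

End RejectProbability.

Definition head_outside n (A : {set 'I_n}) (c : rclause n) : bool :=
  if c.1 is Some y then y \notin A else true.

(* The formula PUR reaches from [F] after setting the variables of [A] to true,
   in any order. *)
Definition assign_set n (A : {set 'I_n}) (F : seq (rclause n)) :=
  [seq (c.1, c.2 :\: A) | c <- F & head_outside A c].

Lemma assign_set0 n (F : seq (rclause n)) : assign_set finset.set0 F = F.
Proof.
rewrite /assign_set (@eq_filter _ _ predT) ?filter_predT; last first.
  by move=> -[[y|] S]; rewrite /head_outside /= ?inE.
by rewrite -[RHS]map_id; apply: eq_map; case=> o S; rewrite finset.setD0.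
Qed.

Lemma assign_true_set n (A : {set 'I_n}) F i :
  assign_true (assign_set A F) i = assign_set (i |: A) F.
Proof.
rewrite /assign_true /assign_set filter_map -map_comp -filter_predI.
congr map; last first.
  apply: eq_filter => -[[y|] S] //=.
  by rewrite /head_outside /= finset.in_setU1 negb_or (inj_eq (@Some_inj _)).
by apply: funext; case=> o S /=; rewrite finset.setDDl finset.setUC.
Qed.

Lemma mem_assign_set n (A : {set 'I_n}) F d : d \in assign_set A F ->
  exists2 c, c \in F & [/\ head_outside A c, d.1 = c.1 & d.2 = c.2 :\: A].
Proof. by case/mapP => c; rewrite mem_filter => /andP[hA cF] ->; exists c. Qed.

Definition supported n (F : seq (rclause n)) (I : {set 'I_n}) :=
  forall i, i \in I -> exists2 c, c \in F & c.1 = Some i /\ c.2 \subset I.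

Lemma supportedU1 n (F : seq (rclause n)) A i c :
  supported F A -> c \in F -> c.1 = Some i -> c.2 \subset A ->
  supported F (i |: A).
Proof.
move=> suppA cF ci cA x; rewrite finset.in_setU1 => /orP[/eqP ->|xA].
  by exists c => //; split => //; exact: fintype.subset_trans cA (finset.subsetU1 _ _).
have [d dF [dx dA]] := suppA x xA.
by exists d => //; split => //; exact: fintype.subset_trans dA (finset.subsetU1 _ _).
Qed.

Lemma can_reject_witness_from n (F : seq (rclause n)) j (A : {set 'I_n}) :
  supported F A -> pur_can_reject j (assign_set A F) ->
  exists I : {set 'I_n}, [/\ #|I| <= #|A| + j, supported F I &
                           exists2 c, c \in F & c.1 = None /\ c.2 \subset I].
Proof.
elim: j A => [|j IH] A suppA //=.
case/exists_inP => i; rewrite inE => /mem_assign_set[c cF [hc /= ci cA]].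
have iA : i \notin A by move: hc; rewrite /head_outside -ci.
have suppiA : supported F (i |: A).
  by apply: supportedU1 suppA cF (esym ci) _; rewrite -finset.setD_eq0 -cA.
have cardiA : #|i |: A| = #|A|.+1 by rewrite finset.cardsU1 iA.
case/orP => [/mem_assign_set[d dF [_ /= dNone dA]] | rej].
  exists (i |: A); split => //; first by rewrite cardiA addnS ltnS leq_addr.
  exists d => //; split => //.
  by rewrite -finset.setD_eq0 finset.setUC -finset.setDDl -dA finset.setDv.
rewrite assign_true_set in rej.
have [I [cardI suppI negI]] := IH _ suppiA rej.
by exists I; split => //; rewrite -addSnnS -cardiA.
Qed.

Lemma can_reject_witness n (F : seq (rclause n)) j :
  pur_can_reject j F ->
  exists I : {set 'I_n}, [/\ #|I| <= j, supported F I &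
                           exists2 c, c \in F & c.1 = None /\ c.2 \subset I].
Proof.
rewrite -{1}(assign_set0 F) => /(can_reject_witness_from (A := finset.set0)).
by rewrite finset.cards0; apply => i; rewrite finset.in_set0.
Qed.

Definition clauses_within n (o : option 'I_n) (I : {set 'I_n}) : {set horn n} :=
  [set c : horn n | ((val c).1 == o) && ((val c).2 \subset I)].

Definition witness_classes n (t : seq 'I_n) : seq {set horn n} :=
  rcons [seq clauses_within (Some i) [set x in t] | i <- t]
        (clauses_within None [set x in t]).

Lemma card_clauses_within n o (I : {set 'I_n}) : #|clauses_within o I| <= 2 ^ #|I|.
Proof.
rewrite -card_powerset -(card_in_imset (f := fun c : horn n => (val c).2)).
  apply: subset_leq_card; apply/fintype.subsetP => _ /imsetP[c + ->].
  by rewrite !inE => /andP[_ ->].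
move=> c d; rewrite !inE => /andP[/eqP c1 _] /andP[/eqP d1 _] e2.
by apply: val_inj; rewrite [val c]surjective_pairing [val d]surjective_pairing c1 d1 e2.
Qed.

Lemma size_witness_classes n (t : seq 'I_n) : size (witness_classes t) = (size t).+1.
Proof. by rewrite size_rcons size_map. Qed.

Lemma prod_card_witness_classes n (t : seq 'I_n) :
  \prod_(A <- witness_classes t) #|A| <= (2 ^ size t) ^ (size t).+1.
Proof.
have cardI : #|[set x in t]| <= size t by rewrite cardsE card_size.
rewrite big_seq (@leq_trans (\prod_(A <- witness_classes t | A \in witness_classes t)
    2 ^ size t)) //; last first.
  by rewrite -big_seq big_const_seq count_predT iter_muln_1 size_witness_classes.
apply: leq_prod => A; rewrite mem_rcons inE => /orP[/eqP ->|/mapP[i _ ->]];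
  by apply: leq_trans (card_clauses_within _ _) _; rewrite leq_exp2l.
Qed.

Lemma disjoint_witness_classes n (t : seq 'I_n) :
  uniq t -> disjoint_sets (witness_classes t).
Proof.
move=> ut c; rewrite /witness_classes -cats1 count_cat count_map /= addn0.
case ec: (val c).1 => [j|].
  rewrite inE ec /= addn0 (@leq_trans (count (pred1 j) t)) //.
    by apply: sub_count => i /=; rewrite inE ec => /andP[/eqP[->] _].
  by rewrite count_uniq_mem // leq_b1.
by rewrite (@eq_count _ _ pred0) ?count_pred0 ?leq_b1 // => i /=; rewrite inE ec.
Qed.

Lemma can_reject_le_witness_count n m k (Phi : m.-tuple (horn n)) :
  pur_can_reject k (map val Phi) <=
  \sum_(s < k.+1) \sum_(t : s.-tuple 'I_n) (uniq t && hits_all (witness_classes t) Phi).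
Proof.
case/boolP: (pur_can_reject _ _) => // /can_reject_witness[I [cardI suppI [c cF [c1 c2]]]].
pose t := Tuple (enum_tupleP I).
have hitsI : hits_all (witness_classes t) Phi.
  have clause_in o : (exists2 d, d \in map val Phi & d.1 = o /\ d.2 \subset I) ->
      has (fun x => x \in clauses_within o [set x in t]) Phi.
    case=> d /mapP[x xPhi ->] [x1 x2]; apply/hasP; exists x => //.
    by rewrite inE x1 eqxx set_enum.
  apply/allP => A; rewrite mem_rcons inE => /orP[/eqP ->|/mapP[i iI ->]].
    by apply: clause_in; exists c.
  by apply: clause_in; apply: suppI; rewrite -mem_enum.
rewrite (bigD1 (Ordinal (cardI : #|I| < k.+1))) //= (bigD1 t) //=.
by rewrite enum_uniq hitsI -addnA leq_addr.
Qed.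

Lemma n_hitting_witness_classes n m (t : seq 'I_n) : uniq t ->
  #|{: horn n}| ^ (size t).+1 * n_hitting m (witness_classes t) <=
    #|{: horn n}| ^ m * m ^ (size t).+1 * (2 ^ size t) ^ (size t).+1.
Proof.
move/disjoint_witness_classes/(n_hitting_le m); rewrite size_witness_classes => le.
by apply: leq_trans le _; rewrite leq_mul2l prod_card_witness_classes orbT.
Qed.

Lemma card_horn n : n * 2 ^ n <= #|{: horn n}|.
Proof.
rewrite card_sig.
have -> : #|[pred c : rclause n | c != (None, finset.set0)]| = #|{: rclause n}|.-1.
  by rewrite -(cardC1 (None, finset.set0)).
rewrite card_prod card_option card_ord.
rewrite -finset.cardsT -powersetT card_powerset finset.cardsT card_ord.
by case: (2 ^ n) (expn_gt0 2 n) => // p _; rewrite mulSn /= leq_addl.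
Qed.

Section Probability.
Local Open Scope ring_scope.
Variable R : realType.

Lemma pur_no_reject_prob_le1 n m k : pur_no_reject_prob R n m k <= 1.
Proof.
rewrite /pur_no_reject_prob; set H := _ ^+ m.
have -> : H = \sum_(Phi : m.-tuple (horn n)) 1 by rewrite sumr_const card_tuple natrX.
have [->|H0] := eqVneq (\sum_(Phi : m.-tuple (horn n)) (1 : R)) 0.
  by rewrite invr0 mul0r ler01.
rewrite ler_pdivrMl ?mulr1; last by rewrite lt0r H0 sumr_ge0 // => Phi _; rewrite ler01.
apply: ler_sum => Phi _; rewrite lerBlDr lerDl; exact: pur_reject_prob_ge0.
Qed.

Lemma ler_div_expn (h Y Z r m : nat) : (0 < h)%N ->
  (h ^ r * Y <= h ^ m * Z)%N -> Y%:R / h%:R ^+ m <= Z%:R / h%:R ^+ r :> R.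
Proof.
move=> h0 le; have hX j : 0 < (h%:R : R) ^+ j by rewrite exprn_gt0 // ltr0n.
rewrite ler_pdivrMr // mulrAC ler_pdivlMr // -!natrX -!natrM ler_nat.
by rewrite mulnC [(Z * _)%N]mulnC.
Qed.

Definition witness_constant (c : R) k :=
  \sum_(s < k.+1) c ^+ s.+1 * ((2 ^ s) ^ s.+1)%:R.

Lemma expected_witnesses_le (c : R) n m s :
  0 <= c -> (0 < n)%N -> m%:R <= c * 2 ^+ n ->
  (\sum_(t : s.-tuple 'I_n) uniq t * n_hitting m (witness_classes t))%:R /
    #|{: horn n}|%:R ^+ m <= c ^+ s.+1 * ((2 ^ s) ^ s.+1)%:R / n%:R.
Proof.
move=> c0 n0 mc; set h := #|{: horn n}|; set W : R := ((2 ^ s) ^ s.+1)%:R.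
have hn : (n * 2 ^ n <= h)%N := card_horn n.
have h0 : (0 < h)%N by apply: leq_trans hn; rewrite muln_gt0 n0 expn_gt0.
have nR : (0 : R) < n%:R by rewrite ltr0n.
have hR : (0 : R) < h%:R by rewrite ltr0n.
have ratio : m%:R / h%:R <= c / n%:R.
  rewrite ler_pdivrMr // (le_trans mc) //.
  have -> : c * 2 ^+ n = c / n%:R * (n * 2 ^ n)%:R.
    by rewrite natrM natrX; field; rewrite gt_eqF.
  by apply: ler_wpM2l; rewrite ?divr_ge0 ?ler0n ?ler_nat.
rewrite natr_sum mulr_suml.
apply: (@le_trans _ _ (\sum_(t : s.-tuple 'I_n) (m ^ s.+1 * (2 ^ s) ^ s.+1)%:R / h%:R ^+ s.+1)).
  apply: ler_sum => t _; apply: ler_div_expn => //.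
  case: (boolP (uniq t)) => [ut|_]; last by rewrite mul0n muln0.
  by have := n_hitting_witness_classes m ut; rewrite size_tuple mul1n mulnA.
have -> : \sum_(t : s.-tuple 'I_n) (m ^ s.+1 * (2 ^ s) ^ s.+1)%:R / h%:R ^+ s.+1 =
          (m%:R / h%:R) ^+ s.+1 * W * n%:R ^+ s.
  rewrite sumr_const card_tuple card_ord -[_ *+ _]mulr_natr natrM /W !natrX expr_div_n.
  by field; rewrite expf_neq0 // gt_eqF.
have -> : c ^+ s.+1 * W / n%:R = (c / n%:R) ^+ s.+1 * W * n%:R ^+ s.
  rewrite expr_div_n [n%:R ^+ s.+1]exprSr; set a := c ^+ _; set b := n%:R ^+ s.
  by field; rewrite gt_eqF //= expf_neq0 // gt_eqF.
apply: ler_wpM2r; first by rewrite exprn_ge0 ?ler0n.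
apply: ler_wpM2r; first exact: ler0n.
by rewrite lerXn2r ?nnegrE ?divr_ge0 ?ler0n.
Qed.

Lemma pur_no_reject_prob_ge (c : R) n m k :
  0 <= c -> (0 < n)%N -> m%:R <= c * 2 ^+ n ->
  1 - witness_constant c k / n%:R <= pur_no_reject_prob R n m k.
Proof.
move=> c0 n0 mc; set h := #|{: horn n}|.
have hm : (0 : R) < h%:R ^+ m.
  by rewrite exprn_gt0 // ltr0n (leq_trans _ (card_horn n)) // muln_gt0 n0 expn_gt0.
pose B (Phi : m.-tuple (horn n)) := (\sum_(s < k.+1) \sum_(t : s.-tuple 'I_n)
  (uniq t && hits_all (witness_classes t) Phi))%N.
have sumB : (\sum_Phi B Phi)%:R / h%:R ^+ m <= witness_constant c k / n%:R.
  rewrite /B exchange_big natr_sum !mulr_suml; apply: ler_sum => s _.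
  rewrite exchange_big (eq_bigr (fun t : s.-tuple 'I_n =>
    uniq t * n_hitting m (witness_classes t))%N).
    exact: expected_witnesses_le.
  move=> t _; rewrite /n_hitting big_distrr /=.
  by apply: eq_bigr => Phi _; case: (uniq t); rewrite ?mul1n ?mul0n.
have rejB (Phi : m.-tuple (horn n)) : pur_reject_prob R k (map val Phi) <= (B Phi)%:R.
  apply: le_trans (pur_reject_prob_le_can_reject R k (map val Phi)) _.
  by rewrite ler_nat can_reject_le_witness_count.
rewrite /pur_no_reject_prob -/h.
apply: le_trans (_ : (h%:R ^+ m)^-1 * \sum_Phi (1 - (B Phi)%:R) <= _).
  rewrite sumrB sumr_const card_tuple natrX mulrBr mulVf ?gt_eqF // -natr_sum.
  by rewrite [_ * _%:R]mulrC lerD2l lerN2; exact: sumB.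
apply: ler_wpM2l; first by rewrite invr_ge0 ltW.
by apply: ler_sum => Phi _; rewrite lerD2l lerN2.
Qed.
End Probability.

Local Open Scope ring_scope.
Local Open Scope classical_set_scope.

Theorem mainTheorem8 (R : realType) (c : R) (k : nat) :
  0 < c -> (1 <= k)%N ->
  (fun n : nat => pur_no_reject_prob R n (Num.truncn (c * 2 ^+ n)) k) @ \oo --> (1 : R).
Proof.
move=> c0 _; rewrite -cvg_shiftS.
set K := witness_constant c k.
apply: (@squeeze_cvgr _ _ _ _ (fun n => 1 - K * harmonic n) (fun=> 1)).
- apply: nearW => n /=; rewrite pur_no_reject_prob_le1 andbT.
  apply: pur_no_reject_prob_ge => //; first exact: ltW.
  by rewrite truncn_le mulr_ge0 ?exprn_ge0 ?ltW.
- rewrite -[X in _ --> X]subr0 -(mulr0 K).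
  exact: cvgB (cvg_cst _) (cvgMl_tmp cvg_harmonic).
- exact: cvg_cst.
Qed.
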